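(* Consider the nonatomic game with tolls, in which a class-$l$ mobile at BS $j$ incurs cost density $\bar c_{lj}(\mathbf{m})=c_{lj}(\mathbf{m})+t_{lj}(\mathbf{m})$, where $t_{lj}(\mathbf{m})=\gamma_l\sum_{i=1}^L m_{ij}g_{ij}c'(m_j)$. This game is a potential game with potential function $C(\mathbf{m})=\sum_{j\in\mathcal{N}}\sum_{l=1}^L m_{lj}g_{lj}c(m_j)$, in the sense that $\partial C(\mathbf{m})/\partial m_{lj}=\bar c_{lj}(\mathbf{m})$ for all $l,j$ on the region $\{\mathbf{m}: m_j<1\ \forall j\}$. Furthermore, a congestion profile is system optimal (minimizes $C$ over all congestion profiles) only if it is a Nash equilibrium of this game with tolls.
   Context: Nonatomic model: classes $\mathcal{L}=\{1,\dots,L\}$ of nonatomic mobiles, class $l$ having total mass $M_l>0$, target SINR density $\gamma_l>0$ and power gain $h_{lj}>0$ to BS $j\in\mathcal{N}=\{1,\dots,N\}$; noise power $\sigma^2>0$. A congestion profile is $\mathbf{m}=(m_{lj})$ with $m_{lj}\ge0$, $\sum_j m_{lj}=M_l$. Set $m_j=\sum_l\gamma_l m_{lj}$, $g_{lj}=\gamma_l\sigma^2/h_{lj}$, $c(z)=1/(1-z)$ for $z<1$ and $c(z)=\infty$ for $z\ge1$, $c'(z)=1/(1-z)^2$ for $z<1$ and $c'(z)=\infty$ for $z\ge1$; $c_{lj}(\mathbf{m})=g_{lj}c(m_j)$. $\mathbf{m}$ is a Nash equilibrium of the game with costs $\bar c_{lj}$ if for all $l,j$, $m_{lj}>0$ implies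 $\bar c_{lj}(\mathbf{m})\le \bar c_{lk}(\mathbf{m})$ for all $k$. Standing feasibility assumption: $\sum_l\gamma_l M_l<N$. *)

From HB Require Import structures.
From mathcomp Require Import all_boot all_order all_algebra.
From mathcomp Require Import all_classical all_reals all_analysis.
Set Implicit Arguments. Unset Strict Implicit. Unset Printing Implicit Defensive.
Import Order.TTheory GRing.Theory Num.Theory.
Import numFieldNormedType.Exports.
Local Open Scope ring_scope.

Section Defs.
Variables (R : realType) (L N : nat).

Definition load (gam : 'I_L -> R) (m : 'I_L -> 'I_N -> R) (j : 'I_N) : R :=
  \sum_(l < L) gam l * m l j.

Definition is_profile (M : 'I_L -> R) (m : 'I_L -> 'I_N -> R) : Prop :=
  (forall l j, 0 <= m l j) /\ (forall l, \sum_(j < N) m l j = M l).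

Definition cfun (z : R) : \bar R :=
  if z < 1 then ((1 - z)^-1)%:E else +oo%E.

Definition dcfun (z : R) : \bar R :=
  if z < 1 then (((1 - z) ^+ 2)^-1)%:E else +oo%E.

Definition gfun (gam : 'I_L -> R) (sigma2 : R) (h : 'I_L -> 'I_N -> R)
  (l : 'I_L) (j : 'I_N) : R := gam l * sigma2 / h l j.

Definition cost gam sigma2 h (m : 'I_L -> 'I_N -> R) l j : \bar R :=
  ((gfun gam sigma2 h l j)%:E * cfun (load gam m j))%E.

Definition toll gam sigma2 h (m : 'I_L -> 'I_N -> R) (l : 'I_L) j : \bar R :=
  ((gam l)%:E * (\sum_(i < L) m i j * gfun gam sigma2 h i j)%:E
     * dcfun (load gam m j))%E.

Definition tolled_cost gam sigma2 h m l j : \bar R :=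
  (cost gam sigma2 h m l j + toll gam sigma2 h m l j)%E.

Definition potential gam sigma2 h (m : 'I_L -> 'I_N -> R) : \bar R :=
  (\sum_(j < N) \sum_(l < L)
     (m l j * gfun gam sigma2 h l j)%:E * cfun (load gam m j))%E.

Definition shift_entry (m : 'I_L -> 'I_N -> R) (l : 'I_L) (j : 'I_N) (t : R) :
  'I_L -> 'I_N -> R :=
  fun l' j' => if (l' == l) && (j' == j) then m l' j' + t else m l' j'.

Definition is_nash (cbar : 'I_L -> 'I_N -> \bar R) (m : 'I_L -> 'I_N -> R) : Prop :=
  forall l j, 0 < m l j -> forall k, (cbar l j <= cbar l k)%E.

Definition system_optimal gam sigma2 h (M : 'I_L -> R) m : Prop :=
  is_profile M m /\
  forall m', is_profile M m' -> (potential gam sigma2 h m <= potential gam sigma2 h m')%E.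

End Defs.

From HB Require Import structures.
From mathcomp Require Import all_boot all_order all_algebra.
From mathcomp Require Import all_classical all_reals all_analysis.
From mathcomp Require Import ring.
Import Order.TTheory GRing.Theory Num.Theory.
Import numFieldNormedType.Exports.
Set Implicit Arguments. Unset Strict Implicit. Unset Printing Implicit Defensive.
Local Open Scope classical_set_scope.
Local Open Scope ring_scope.

(* On profiles whose loads stay below 1 the potential is the finite sum over base
   stations of S_j / (1 - m_j), with S_j = sum_i m_ij g_ij.  Moving a mass t of
   class l onto base station j shifts S_j by g_lj t and m_j by gamma_l t, and
   differentiating that single quotient yields the tolled cost.  A system optimum
   has all loads below 1: splitting every class uniformly is feasible with finite
   potential, whereas a saturated base station carrying positive mass makes the
   potential infinite.  Then transferring a small mass e of class l from a used
   base station j to any k is feasible and cannot lower the potential, so the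
   right derivative in e, namely bar c_lk - bar c_lj, is nonnegative. *)

Lemma is_deriveV (R : numFieldType) (V : normedModType R) (f : V -> R)
    (x v : V) (df : R) :
  f x != 0 -> is_derive x v f df ->
  is_derive x v (fun y => (f y)^-1) (- (f x) ^- 2 *: df).
Proof.
move=> fx0 [fxv <-]; apply: DeriveDef; first exact: derivableV.
by rewrite deriveV.
Qed.

Lemma is_derive_affine (R : numFieldType) (a c x : R) :
  is_derive x (1 : R) (fun t : R => a + c * t) c.
Proof.
have := is_deriveD (is_derive_cst a x 1) (is_deriveZ c (is_derive_id x 1)).
by rewrite add0r [_ *: 1]mulr1.
Qed.

Lemma near0_affine_lt (R : realFieldType) (b c z : R) : b < z ->
  \forall t \near (0 : R), b + c * t < z.
Proof.
move=> bz; have : (fun t : R => b + c * t) @ 0 --> b + c * 0.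
  exact: cvgD (cvg_cst _) (cvgZ (cvg_cst _) cvg_id).
by rewrite mulr0 addr0 => /cvgr_lt; apply.
Qed.

Lemma is_derive_at_right_min_ge0 (R : realFieldType) (f : R -> R) (x df : R) :
  is_derive x (1 : R) f df -> (\forall t \near x^'+, f x <= f t) -> 0 <= df.
Proof.
move=> [fx <-] /nbhs_ballP[e e0 fmin].
rewrite ['D_1 f x]cvg_at_rightE; last exact: fx.
apply: limr_ge.
  rewrite -(cvg_at_rightE (fun h : R => h^-1 *: ((f \o shift x) _ - f x))) //.
  apply: cvg_trans fx; apply: cvg_app.
  move=> A [r r0 Ar]; exists r => // t tr t0; apply: Ar => //.
  exact/lt0r_neq0.
near=> h; apply: mulr_ge0.
  by rewrite invr_ge0; apply: ltW; near: h; exists 1 => /=.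
rewrite subr_ge0 [_%:A]mulr1 /=; apply: fmin; last first.
  by rewrite ltrDr; near: h; exists 1 => /=.
near: h; exists e => // h /=; rewrite /ball /= distrC subr0 => he _.
by rewrite /ball /= opprD addrCA subrr addr0 normrN.
Unshelve. all: by end_near. Qed.

Definition column_cost (R : numFieldType) (S b : R) : R := S / (1 - b).

Lemma is_derive_column_cost (R : numFieldType) (S g b c : R) : b != 1 ->
  is_derive (0 : R) (1 : R) (fun t : R => column_cost (S + g * t) (b + c * t))
    (g / (1 - b) + c * S / (1 - b) ^+ 2).
Proof.
move=> b1; have b0 : 1 - b != 0 by rewrite subr_eq0 eq_sym.
have den : is_derive (0 : R) (1 : R) (fun t => 1 - (b + c * t)) (- c).
  have := is_derive_affine (1 - b) (- c) 0.
  by apply: near_eq_is_derive; near=> t; ring.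
have := is_deriveM (is_derive_affine S g 0) (is_deriveV _ den).
rewrite /= !mulr0 !addr0 => /(_ b0) H.
apply: is_derive_eq H _.
by rewrite /GRing.scale /= -exprVn; field.
Unshelve. all: by end_near. Qed.

Lemma uniform_profile (R : realType) (L N : nat) (M : 'I_L -> R) :
  (0 < N)%N -> (forall l, 0 <= M l) ->
  is_profile M (fun l (_ : 'I_N) => M l / N%:R).
Proof.
move=> N0 M0; have N0' : (0 : R) < N%:R by rewrite ltr0n.
split=> [l j|l]; first by rewrite divr_ge0.
by rewrite sumr_const card_ord -[_ *+ N]mulr_natr divfK ?gt_eqF.
Qed.

Section TolledGame.
Variables (R : realType) (L N : nat).
Variables (gam : 'I_L -> R) (sigma2 : R) (h : 'I_L -> 'I_N -> R).
Implicit Types (m : 'I_L -> 'I_N -> R) (l : 'I_L) (j k : 'I_N).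

Definition gload m j : R := \sum_(i < L) gfun gam sigma2 h i j * m i j.

Definition real_potential m : R :=
  \sum_(j < N) column_cost (gload m j) (load gam m j).

Definition real_tolled_cost m l j : R :=
  gfun gam sigma2 h l j / (1 - load gam m j)
  + gam l * gload m j / (1 - load gam m j) ^+ 2.

Definition transfer m l j k (e : R) :=
  shift_entry (shift_entry m l j (- e)) l k e.

Lemma sum_shift_entry (c : 'I_L -> R) m l j t j' :
  \sum_(i < L) c i * shift_entry m l j t i j' =
  \sum_(i < L) c i * m i j' + (if j' == j then c l * t else 0).
Proof.
case: (eqVneq j' j) => [->|nj]; last first.
  by rewrite addr0; apply: eq_bigr => i _; rewrite /shift_entry (negbTE nj) andbF.
rewrite (bigD1 l) //= [in RHS](bigD1 l) //= /shift_entry !eqxx /= mulrDr.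
rewrite addrAC; congr (_ + _ + _); apply: eq_bigr => i /negbTE -> //.
Qed.

Lemma sum_shift_entry_row m l j t i :
  \sum_(j' < N) shift_entry m l j t i j' =
  \sum_(j' < N) m i j' + (if i == l then t else 0).
Proof.
case: (eqVneq i l) => [->|nl]; last first.
  by rewrite addr0; apply: eq_bigr => j' _; rewrite /shift_entry (negbTE nl).
rewrite (bigD1 j) //= [in RHS](bigD1 j) //= /shift_entry !eqxx /=.
by rewrite addrAC; congr (_ + _ + _); apply: eq_bigr => j' /negbTE ->.
Qed.

Lemma load_shift m l j t j' :
  load gam (shift_entry m l j t) j' =
  load gam m j' + (if j' == j then gam l * t else 0).
Proof. exact: sum_shift_entry. Qed.

Lemma gload_shift m l j t j' :
  gload (shift_entry m l j t) j' =
  gload m j' + (if j' == j then gfun gam sigma2 h l j * t else 0).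
Proof. by rewrite /gload sum_shift_entry; case: eqP => // ->. Qed.

Lemma real_potential_shift m l j t :
  real_potential (shift_entry m l j t) = real_potential m
  + (column_cost (gload m j + gfun gam sigma2 h l j * t) (load gam m j + gam l * t)
     - column_cost (gload m j) (load gam m j)).
Proof.
rewrite /real_potential (bigD1 j) //= [in RHS](bigD1 j) //=.
rewrite gload_shift load_shift eqxx (eq_bigr (fun j' =>
  column_cost (gload m j') (load gam m j'))); first by ring.
by move=> j' nj; rewrite gload_shift load_shift (negbTE nj) !addr0.
Qed.

Lemma potentialE m : (forall j, load gam m j < 1) ->
  potential gam sigma2 h m = (real_potential m)%:E.
Proof.
move=> m1; rewrite /potential /real_potential -sumEFin; apply: eq_bigr => j _.
rewrite /cfun m1 /column_cost /gload mulr_suml -sumEFin.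
by apply: eq_bigr => l _; rewrite -EFinM (mulrC (m l j)).
Qed.

Lemma tolled_costE m l j : load gam m j < 1 ->
  tolled_cost gam sigma2 h m l j = (real_tolled_cost m l j)%:E.
Proof.
move=> mj1; rewrite /tolled_cost /cost /toll /cfun /dcfun mj1 -!EFinM -EFinD.
congr (_ + _ * _ * _)%:E; apply: eq_bigr => i _; exact: mulrC.
Qed.

Lemma is_derive_real_potential_shift m l j : load gam m j < 1 ->
  is_derive (0 : R) (1 : R) (fun t => real_potential (shift_entry m l j t))
    (real_tolled_cost m l j).
Proof.
move=> /lt_eqF/negbT mj1; have := is_deriveD
  (is_derive_cst (real_potential m - column_cost (gload m j) (load gam m j)) 0 (1 : R))
  (is_derive_column_cost (gload m j) (gfun gam sigma2 h l j) (gam l) mj1).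
rewrite add0r; apply: near_eq_is_derive; near=> t.
by rewrite real_potential_shift !fctE; ring.
Unshelve. all: by end_near. Qed.

Lemma near_shift_load_lt1 m l j : (forall j', load gam m j' < 1) ->
  \forall t \near (0 : R), forall j', load gam (shift_entry m l j t) j' < 1.
Proof.
move=> m1; near=> t => j'; rewrite load_shift.
case: eqP => [->|_]; last by rewrite addr0.
by near: t; exact: near0_affine_lt.
Unshelve. all: by end_near. Qed.

Lemma is_derive_potential_shift m l j : (forall j', load gam m j' < 1) ->
  is_derive (0 : R) (1 : R)
    (fun t => fine (potential gam sigma2 h (shift_entry m l j t)))
    (fine (tolled_cost gam sigma2 h m l j)).
Proof.
move=> m1; rewrite tolled_costE //=.
have := is_derive_real_potential_shift l (m1 j).
apply: near_eq_is_derive; near=> t.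
by rewrite potentialE //; near: t; exact: near_shift_load_lt1.
Unshelve. all: by end_near. Qed.

Lemma is_profile_transfer (M : 'I_L -> R) m l j k e :
  is_profile M m -> 0 <= e <= m l j -> is_profile M (transfer m l j k e).
Proof.
move=> [m0 mM] /andP[e0 em]; split=> [i j'|i].
  have m1 i' j'' : 0 <= shift_entry m l j (- e) i' j''.
    by rewrite /shift_entry; case: ifP => [/andP[/eqP-> /eqP->]|_]; rewrite ?subr_ge0.
  by rewrite /transfer {1}/shift_entry; case: ifP => _; rewrite ?addr_ge0.
by rewrite !sum_shift_entry_row mM; case: eqP => _; rewrite ?addr0 ?subrK.
Qed.

Lemma real_potential_transfer m l j k e : k != j ->
  real_potential (transfer m l j k e) = real_potential m
  + (column_cost (gload m j + - gfun gam sigma2 h l j * e) (load gam m j + - gam l * e)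
     - column_cost (gload m j) (load gam m j))
  + (column_cost (gload m k + gfun gam sigma2 h l k * e) (load gam m k + gam l * e)
     - column_cost (gload m k) (load gam m k)).
Proof.
move=> kj; rewrite /transfer !real_potential_shift.
by rewrite gload_shift load_shift (negbTE kj) !addr0 !mulrN !mulNr.
Qed.

Lemma is_derive_real_potential_transfer m l j k : k != j ->
  load gam m j < 1 -> load gam m k < 1 ->
  is_derive (0 : R) (1 : R) (fun e => real_potential (transfer m l j k e))
    (real_tolled_cost m l k - real_tolled_cost m l j).
Proof.
move=> kj /lt_eqF/negbT mj1 /lt_eqF/negbT mk1.
have := is_deriveD (is_deriveD (is_derive_cst (real_potential m
    - column_cost (gload m j) (load gam m j)
    - column_cost (gload m k) (load gam m k)) 0 (1 : R))
  (is_derive_column_cost (gload m j) (- gfun gam sigma2 h l j) (- gam l) mj1))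
  (is_derive_column_cost (gload m k) (gfun gam sigma2 h l k) (gam l) mk1).
rewrite add0r => H; apply: (is_derive_eq (near_eq_is_derive _ H)).
  by near=> e; rewrite real_potential_transfer // !fctE; ring.
by rewrite /real_tolled_cost; ring.
Unshelve. all: by end_near. Qed.

Lemma near_transfer_load_lt1 m l j k : k != j ->
  (forall j', load gam m j' < 1) ->
  \forall e \near (0 : R), forall j', load gam (transfer m l j k e) j' < 1.
Proof.
move=> kj m1; near=> e => j'; rewrite /transfer !load_shift.
case: (eqVneq j' k) => [->|_].
  by rewrite (negbTE kj) addr0; near: e; exact: near0_affine_lt.
rewrite addr0; case: eqP => [->|_]; last by rewrite addr0.
by rewrite mulrN -mulNr; near: e; exact: near0_affine_lt.
Unshelve. all: by end_near. Qed.

Variable M : 'I_L -> R.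
Hypotheses (hM : forall l, 0 < M l) (hgam : forall l, 0 < gam l).
Hypothesis hg : forall l j, 0 < gfun gam sigma2 h l j.
Hypothesis hfeas : \sum_(l < L) gam l * M l < N%:R.

Lemma potential_pinfty m l j : (forall l' j', 0 <= m l' j') ->
  0 < m l j -> 1 <= load gam m j -> potential gam sigma2 h m = +oo%E.
Proof.
move=> m0 mlj mj1; apply/eqP; rewrite eq_le leey /=.
have term_ge0 j' l' : (0 <= (m l' j' * gfun gam sigma2 h l' j')%:E
    * cfun (load gam m j'))%E.
  apply: mule_ge0; first by rewrite lee_fin mulr_ge0 // ltW.
  rewrite /cfun; case: ifP => [lt1|_]; last exact: leey.
  by rewrite lee_fin invr_ge0 subr_ge0 ltW.
rewrite /potential (bigD1 j) //= (bigD1 l) //= -addeA.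
apply: (le_trans _ (leeDl _ _)); last first.
  by apply: adde_ge0; apply: sume_ge0 => i _ //; apply: sume_ge0 => *.
by rewrite /cfun ltNge mj1 /= gt0_muley // lte_fin mulr_gt0.
Qed.

Lemma optimal_load_lt1 m : system_optimal gam sigma2 h M m ->
  forall j, load gam m j < 1.
Proof.
move=> [[m0 mM] opt] j; rewrite ltNge; apply/negP => mj1.
have N0 : (0 < N)%N by apply: leq_ltn_trans (ltn_ord j).
have Nr : (0 : R) < N%:R by rewrite ltr0n.
set u := fun l (_ : 'I_N) => M l / N%:R.
have u1 j' : load gam u j' < 1.
  rewrite /load /u (eq_bigr (fun l => gam l * M l / N%:R)) => [|l _]; last first.
    by rewrite mulrA.
  by rewrite -mulr_suml ltr_pdivrMr // mul1r.
have [l /andP[_ glmj]] : exists l, true && (0 < gam l * m l j).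
  apply: psumr_neq0P => [l _|]; first exact: mulr_ge0 (ltW (hgam l)) (m0 l j).
  by move=> mj0; move: mj1; rewrite /load mj0 ler10.
have mlj : 0 < m l j by rewrite -(pmulr_rgt0 _ (hgam l)).
have := opt u (uniform_profile N0 (fun l => ltW (hM l))).
by rewrite (potential_pinfty m0 mlj mj1) (potentialE u1) leye_eq.
Qed.

Lemma optimal_is_nash m : system_optimal gam sigma2 h M m ->
  is_nash (tolled_cost gam sigma2 h m) m.
Proof.
move=> opt l j mlj k; have m1 := optimal_load_lt1 opt.
case: (eqVneq k j) => [->//|kj].
rewrite !tolled_costE // lee_fin -subr_ge0.
apply: (is_derive_at_right_min_ge0 (is_derive_real_potential_transfer l kj
  (m1 j) (m1 k))).
have transfer0 : real_potential (transfer m l j k 0) = real_potential m.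
  by rewrite real_potential_transfer // !mulr0 !addr0 !subrr !addr0.
near=> e; rewrite transfer0 -lee_fin -potentialE // -potentialE.
  apply: opt.2; apply: is_profile_transfer; first exact: opt.1.
  apply/andP; split; apply: ltW; near: e; [exact: nbhs_right_gt|exact: nbhs_right_lt].
by near: e; apply: cvg_within; exact: near_transfer_load_lt1.
Unshelve. all: by end_near. Qed.

End TolledGame.

Theorem proposition12 (R : realType) (L N : nat)
  (M gam : 'I_L -> R) (h : 'I_L -> 'I_N -> R) (sigma2 : R)
  (hM : forall l, 0 < M l) (hgam : forall l, 0 < gam l)
  (hh : forall l j, 0 < h l j) (hsigma : 0 < sigma2)
  (hfeas : \sum_(l < L) gam l * M l < N%:R) :
  (forall (m : 'I_L -> 'I_N -> R), (forall j, load gam m j < 1) ->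
     forall (l : 'I_L) (j : 'I_N),
       is_derive (0 : R) (1 : R)
         (fun t : R => fine (potential gam sigma2 h (shift_entry m l j t)))
         (fine (tolled_cost gam sigma2 h m l j)))
  /\
  (forall m : 'I_L -> 'I_N -> R,
     system_optimal gam sigma2 h M m -> is_nash (tolled_cost gam sigma2 h m) m).
Proof.
have hg l j : 0 < gfun gam sigma2 h l j by rewrite /gfun divr_gt0 ?mulr_gt0.
split=> [m m1 l j|m opt]; first exact: is_derive_potential_shift.
exact: (optimal_is_nash hM hgam hg hfeas opt).
Qed.
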